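(* Let $p\in\mathbb{R}$. If $z=(v,m,\sigma,e)\in Z$ satisfies $m\ne(e+p)v$ and $\lambda_{\max}(v\otimes v-\sigma)<e$, then $z\in K^{\Lambda,2}$.
   Context: $\mathcal S_0^{2\times2}$ is the space of traceless symmetric $2\times2$ matrices, $Z:=\mathbb{R}^2\times\mathbb{R}^2\times\mathcal S_0^{2\times2}\times\mathbb{R}$, $\lambda_{\max}$ the largest eigenvalue, $K:=\{z\in Z: v\otimes v-\sigma=e\,\mathrm{Id},\ m=(e+p)v\}$. The wave cone is $\Lambda=\{\bar z=(\bar v,\bar m,\bar\sigma,\bar e)\in Z:\ (\bar v,\bar e)\neq0\text{ and there is }0\ne(\xi,c)\in\mathbb{R}^2\times\mathbb{R}\text{ with }(\bar\sigma+\bar e\,\mathrm{Id})\xi+c\bar v=0,\ \bar v\cdot\xi=0,\ \bar m\cdot\xi+c\bar e=0\}$. For $A\subset Z$, $A^{\Lambda,1}:=A\cup\{sz_1+(1-s)z_2: z_1,z_2\in A,\ s\in[0,1],\ z_1-z_2\in\Lambda\}$; $K^{\Lambda,1}:=(K)^{\Lambda,1}$ and $K^{\Lambda,2}:=(K^{\Lambda,1})^{\Lambda,1}$. *)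

From HB Require Import structures.
From mathcomp Require Import all_boot all_order all_algebra.
From mathcomp Require Import reals.
Set Implicit Arguments. Unset Strict Implicit. Unset Printing Implicit Defensive.
Import Order.TTheory GRing.Theory Num.Theory.
Local Open Scope ring_scope.

(* Ambient space: (v, m, sigma, e) with v, m column vectors in R^2,
   sigma a 2x2 matrix (required to be symmetric traceless by inZ), e real. *)
Definition Zt (R : realType) : Type :=
  ('cV[R]_2 * 'cV[R]_2 * 'M[R]_2 * R)%type.

Definition dot (R : realType) (u w : 'cV[R]_2) : R := \sum_(i < 2) u i 0 * w i 0.

Definition inZ (R : realType) (z : Zt R) : Prop :=
  let '(v, m, s, e) := z in s^T = s /\ \tr s = 0.

Definition tens (R : realType) (v : 'cV[R]_2) : 'M[R]_2 := v *m v^T.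

Definition inK (R : realType) (p : R) (z : Zt R) : Prop :=
  inZ z /\
  let '(v, m, s, e) := z in tens v - s = e%:M /\ m = (e + p) *: v.

Definition wave_cone (R : realType) (z : Zt R) : Prop :=
  inZ z /\
  let '(v, m, s, e) := z in
  ~ (v = 0 /\ e = 0) /\
  exists (xi : 'cV[R]_2) (c : R),
    ~ (xi = 0 /\ c = 0) /\
    (s + e%:M) *m xi + c *: v = 0 /\
    dot v xi = 0 /\
    dot m xi + c * e = 0.

Definition Zsub (R : realType) (z1 z2 : Zt R) : Zt R :=
  let '(v1, m1, s1, e1) := z1 in
  let '(v2, m2, s2, e2) := z2 in
  (v1 - v2, m1 - m2, s1 - s2, e1 - e2).

Definition Zcomb (R : realType) (t : R) (z1 z2 : Zt R) : Zt R :=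
  let '(v1, m1, s1, e1) := z1 in
  let '(v2, m2, s2, e2) := z2 in
  (t *: v1 + (1 - t) *: v2, t *: m1 + (1 - t) *: m2,
   t *: s1 + (1 - t) *: s2, t * e1 + (1 - t) * e2).

Definition lam1 (R : realType) (A : Zt R -> Prop) (z : Zt R) : Prop :=
  A z \/
  exists (z1 z2 : Zt R) (t : R),
    A z1 /\ A z2 /\ 0 <= t <= 1 /\ wave_cone (Zsub z1 z2) /\ z = Zcomb t z1 z2.

Definition K_lam2 (R : realType) (p : R) : Zt R -> Prop := lam1 (lam1 (inK p)).

(* lambda_max(M) < e, expressed as: every (real) eigenvalue of M is < e.
   For a real symmetric matrix the eigenvalues are real and nonempty, so
   this is exactly "the largest eigenvalue is < e". *)
Definition lambda_max_lt (R : realType) (M : 'M[R]_2) (e : R) : Prop :=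
  forall a : R, eigenvalue M a -> a < e.

From HB Require Import structures.
From mathcomp Require Import all_boot all_order all_algebra.
From mathcomp Require Import reals ring lra.
Set Implicit Arguments. Unset Strict Implicit. Unset Printing Implicit Defensive.
Import Order.TTheory GRing.Theory Num.Theory.
Local Open Scope ring_scope.

(* Every point of Z with tr sigma = 0 is [Zpt v P q] with P = e Id - (v (x) v - sigma)
   and q = m - (e + p) v, and K is the set of points [Zpt c 0 0].  Two points
   [Zpt c1 P q] and [Zpt c2 P q] with c1 <> c2 always differ by a wave-cone
   direction (take xi orthogonal to c1 - c2), and their convex combinations add to P
   a positive multiple of D (x) D and to q a multiple of D, D = c1 - c2; choosing the
   segment suitably, any such multiples are reached.  The spectral hypothesis says
   exactly that P is positive definite, so P = l1 D1 (x) D1 + l2 D2 (x) D2 with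
   l1, l2 > 0 and D1, D2 a basis in which q also decomposes: two splittings lead
   from K to z. *)

Lemma sum_ord2 (V : nmodType) (F : 'I_2 -> V) : \sum_(i < 2) F i = F 0 + F 1.
Proof. by rewrite !big_ord_recl big_ord0 addr0; congr (_ + F _); apply: val_inj. Qed.

Lemma ord2P (i : 'I_2) : i = 0 \/ i = 1.
Proof. by case: i => -[|[|//]] Hi; [left | right]; apply: val_inj. Qed.

Lemma det_mx2 (R : comNzRingType) (A : 'M[R]_2) :
  \det A = A 0 0 * A 1 1 - A 0 1 * A 1 0.
Proof.
rewrite (expand_det_row _ 0) sum_ord2 /cofactor !det_mx11 !mxE /=.
rewrite expr0 expr1 mul1r mulN1r mulrN; congr (_ * _ - _ * _); congr (A _ _); exact: val_inj.
Qed.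

Lemma eigenvalue_det0 (F : fieldType) n (A : 'M[F]_n) a :
  \det (a%:M - A) = 0 -> eigenvalue A a.
Proof.
move/eqP/det0P => [v nz_v]; rewrite mulmxBr mul_mx_scalar => /eqP.
by rewrite subr_eq0 => /eqP vA; apply/eigenvalueP; exists v.
Qed.

Ltac coords :=
  rewrite ?/dot ?/tens ?/mxtrace;
  try (let i := fresh "i" in let j := fresh "j" in
       apply/matrixP => i j; try rewrite [j]ord1);
  rewrite ?(mxE, sum_ord2, big_ord1) /=.

Section Plane.
Variable R : realType.

Lemma cV2_eq0 (u : 'cV[R]_2) : u 0 0 = 0 -> u 1 0 = 0 -> u = 0.
Proof. by move=> u0 u1; apply/matrixP => i j; rewrite [j]ord1 mxE; case: (ord2P i) => ->. Qed.

Lemma dot_self_gt0 (u : 'cV[R]_2) : u != 0 -> 0 < dot u u.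
Proof.
move=> nz_u; rewrite /dot sum_ord2 lt_def andbC; apply/andP; split; first nra.
by apply: contraNneq nz_u => u0; apply/eqP/cV2_eq0; nra.
Qed.

Lemma tr_tens (c : 'cV[R]_2) : (tens c)^T = tens c.
Proof. by rewrite /tens trmx_mul trmxK. Qed.

Variable p : R.

Definition Zpt (c : 'cV[R]_2) (P : 'M[R]_2) (q : 'cV[R]_2) : Zt R :=
  let e := (dot c c + \tr P) / 2 in (c, (e + p) *: c + q, tens c - e%:M + P, e).

Lemma Zpt_coords (v m : 'cV[R]_2) (s : 'M[R]_2) (e : R) :
  \tr s = 0 -> (v, m, s, e) = Zpt v (e%:M - (tens v - s)) (m - (e + p) *: v).
Proof.
move=> tr_s; rewrite /Zpt.
have -> : (dot v v + \tr (e%:M - (tens v - s))) / 2 = e.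
  by move: tr_s; coords => tr_s; lra.
by congr (_, _, _); [congr (_, _) | ]; coords; ring.
Qed.

Lemma inZ_Zpt c P q : P^T = P -> inZ (Zpt c P q).
Proof.
move=> sym_P; split.
  by rewrite !raddfD raddfN /= tr_tens tr_scalar_mx sym_P.
by coords; field.
Qed.

Lemma inK_Zpt0 c : inK p (Zpt c 0 0).
Proof.
split; first by apply: inZ_Zpt; rewrite trmx0.
by rewrite /= !addr0 opprB addrC subrK.
Qed.

Lemma wave_cone_Zsub_Zpt c1 c2 P q :
  c1 != c2 -> wave_cone (Zsub (Zpt c1 P q) (Zpt c2 P q)).
Proof.
move=> neq_c; rewrite /Zsub /Zpt /=.
set D := c1 - c2; set e1 := (dot c1 c1 + _) / 2; set e2 := (dot c2 c2 + _) / 2.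
have -> : tens c1 - e1%:M + P - (tens c2 - e2%:M + P) = tens c1 - tens c2 - (e1 - e2)%:M.
  by coords; ring.
split; first split.
- by rewrite !raddfB /= !tr_tens !tr_scalar_mx.
- by rewrite /e1 /e2; coords; field.
have nz_D : D != 0 by rewrite subr_eq0.
split; first by case=> D0; rewrite D0 eqxx in nz_D.
pose xi := D 0 0 *: delta_mx 1 0 - D 1 0 *: delta_mx 0 0 : 'cV[R]_2.
exists xi, (- dot c1 xi); split.
  case=> xi0 _; have := dot_self_gt0 nz_D.
  have -> : dot D D = dot xi xi by rewrite /xi; coords; ring.
  by rewrite xi0 /dot big1 ?ltxx // => i _; rewrite mxE mul0r.
split; last split.
- by rewrite /xi /D; coords; ring.
- by rewrite /xi /D; coords; ring.
- by rewrite /xi /D /e1 /e2; coords; field.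
Qed.

Lemma Zcomb_Zpt t c1 c2 P q :
  Zcomb t (Zpt c1 P q) (Zpt c2 P q) =
  Zpt (t *: c1 + (1 - t) *: c2) (P + (t * (1 - t)) *: tens (c1 - c2))
      (q + (t * (1 - t) * (dot (c1 - c2) (c1 + c2) / 2)) *: (c1 - c2)).
Proof.
rewrite /Zcomb /Zpt.
have -> : (dot (t *: c1 + (1 - t) *: c2) (t *: c1 + (1 - t) *: c2)
           + \tr (P + (t * (1 - t)) *: tens (c1 - c2))) / 2
          = t * ((dot c1 c1 + \tr P) / 2) + (1 - t) * ((dot c2 c2 + \tr P) / 2).
  by coords; field.
by congr (_, _, _); [congr (_, _) | ]; coords; field.
Qed.

Lemma lam1_Zpt_segment (A : Zt R -> Prop) t c1 c2 P q :
  0 <= t <= 1 -> c1 != c2 -> A (Zpt c1 P q) -> A (Zpt c2 P q) ->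
  lam1 A (Zpt (t *: c1 + (1 - t) *: c2) (P + (t * (1 - t)) *: tens (c1 - c2))
              (q + (t * (1 - t) * (dot (c1 - c2) (c1 + c2) / 2)) *: (c1 - c2))).
Proof.
move=> t01 neq_c A1 A2; right; exists (Zpt c1 P q), (Zpt c2 P q), t.
rewrite Zcomb_Zpt; do 4!split=> //; exact: wave_cone_Zsub_Zpt.
Qed.

(* t = 1/2 - h/k solves both equations as soon as k^2 = 4 (r + h^2). *)
Lemma segment_weights (r h : R) : 0 < r ->
  exists t k, [/\ 0 <= t <= 1, k != 0, t * (1 - t) * k ^+ 2 = r & (2^-1 - t) * k = h].
Proof.
move=> r_gt0; set k := 2 * Num.sqrt (r + h ^+ 2).
have k_gt0 : 0 < k by rewrite mulr_gt0 // sqrtr_gt0; nra.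
have Ek : k ^+ 2 = 4 * (r + h ^+ 2) by rewrite exprMn sqr_sqrtr; [ring | nra].
have hk_le : h / k <= 2^-1 by rewrite ler_pdivrMr //; nra.
have hk_ge : - 2^-1 <= h / k by rewrite ler_pdivlMr //; nra.
exists (2^-1 - h / k), k; split; rewrite ?gt_eqF //.
- by apply/andP; split; lra.
- have -> : (2^-1 - h / k) * (1 - (2^-1 - h / k)) * k ^+ 2 = k ^+ 2 / 4 - h ^+ 2.
    by field; rewrite gt_eqF.
  by rewrite Ek; field.
- by field; rewrite gt_eqF.
Qed.

Lemma lam1_Zpt_add_rank_one (A : Zt R -> Prop) P q D lam :
  (forall c, A (Zpt c P q)) -> D != 0 -> 0 < lam ->
  forall c mu, lam1 A (Zpt c (P + lam *: tens D) (q + mu *: D)).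
Proof.
move=> AP nz_D lam_gt0 c mu.
have DD_gt0 := dot_self_gt0 nz_D.
have [t [k [t01 nz_k Et Ek]]] := segment_weights ((mu / lam - dot D c) / dot D D) lam_gt0.
set c1 := c + ((1 - t) * k) *: D; set c2 := c - (t * k) *: D.
have D12 : c1 - c2 = k *: D by rewrite /c1 /c2; coords; ring.
have neq_c : c1 != c2 by rewrite -subr_eq0 D12 scaler_eq0 negb_or nz_k.
have Emu : mu = lam * (dot D c + (2^-1 - t) * k * dot D D).
  by rewrite Ek; field; rewrite !gt_eqF.
have := lam1_Zpt_segment t01 neq_c (AP c1) (AP c2).
by rewrite Emu -Et D12 /c1 /c2; congr (lam1 A (Zpt _ _ _)); coords; field.
Qed.

Lemma K_lam2_Zpt_posdef c P q :
  P^T = P -> 0 < P 1 1 -> 0 < \det P -> K_lam2 p (Zpt c P q).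
Proof.
move=> sym_P P11_gt0 detP_gt0.
have P10 : P 1 0 = P 0 1 by rewrite -[in LHS]sym_P mxE.
set D1 := col 1 P; set D2 : 'cV[R]_2 := delta_mx 0 0.
have -> : Zpt c P q =
    Zpt c (0 + (P 1 1)^-1 *: tens D1 + (\det P / P 1 1) *: tens D2)
          (0 + (q 1 0 / P 1 1) *: D1 + (q 0 0 - q 1 0 / P 1 1 * P 0 1) *: D2).
  rewrite det_mx2 P10; congr Zpt; apply/matrixP => i j;
    case: (ord2P i) => ->; try rewrite [j]ord1; try case: (ord2P j) => ->;
    by coords; rewrite ?P10; field; rewrite gt_eqF.
rewrite /K_lam2; apply: lam1_Zpt_add_rank_one => [c' | | ].
- apply: lam1_Zpt_add_rank_one => [c'' | | ]; first exact: inK_Zpt0.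
    by apply/eqP => /matrixP /(_ 1 0); rewrite !mxE => /eqP; rewrite gt_eqF.
  by rewrite invr_gt0.
- by apply/eqP => /matrixP /(_ 0 0); rewrite !mxE /= => /eqP; rewrite oner_eq0.
- by rewrite divr_gt0.
Qed.

Lemma lambda_max_lt_posdef (M : 'M[R]_2) e :
  M^T = M -> lambda_max_lt M e -> 0 < (e%:M - M) 1 1 /\ 0 < \det (e%:M - M).
Proof.
move=> sym_M lt_e.
have M10 : M 1 0 = M 0 1 by rewrite -[in LHS]sym_M mxE.
set rho := Num.sqrt (((M 0 0 - M 1 1) / 2) ^+ 2 + M 0 1 ^+ 2).
have rho_ge0 : 0 <= rho by exact: sqrtr_ge0.
have rho2 : rho ^+ 2 = ((M 0 0 - M 1 1) / 2) ^+ 2 + M 0 1 ^+ 2.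
  by rewrite sqr_sqrtr // addr_ge0 ?sqr_ge0.
have : (M 0 0 + M 1 1) / 2 + rho < e.
  apply/lt_e/eigenvalue_det0; rewrite det_mx2 !mxE /= M10 mulr1n mulr0n.
  transitivity (rho ^+ 2 - (((M 0 0 - M 1 1) / 2) ^+ 2 + M 0 1 ^+ 2)); first by field.
  by rewrite rho2 subrr.
rewrite det_mx2 !mxE /= M10 mulr1n mulr0n => lt_e'.
have rho_ge : (M 1 1 - M 0 0) / 2 <= rho by nra.
split; first lra.
nra.
Qed.

End Plane.

Theorem lemma2p7 (R : realType) (p : R) (v m : 'cV[R]_2) (s : 'M[R]_2) (e : R) :
  inZ (v, m, s, e) ->
  m <> (e + p) *: v ->
  lambda_max_lt (tens v - s) e ->
  K_lam2 p (v, m, s, e).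
Proof.
move=> [sym_s tr_s] _ lt_e.
have sym_M : (tens v - s)^T = tens v - s by rewrite raddfB /= tr_tens sym_s.
have [P11_gt0 detP_gt0] := lambda_max_lt_posdef sym_M lt_e.
rewrite (Zpt_coords p v m e tr_s); apply: K_lam2_Zpt_posdef => //.
by rewrite raddfB /= tr_scalar_mx sym_M.
Qed.
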